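(* Let $B=F_{2,3}$ be the bowtie and let $\vec B$ be an orientation of $B$ such that either (a) all four edges incident to the center are directed into the center, or all four are directed out of the center; or (b) in one triangle both edges incident to the center are directed into the center, and in the other triangle both edges incident to the center are directed out of the center. Then for all sufficiently large $n$, $D(n,\vec B)>2^{\mathrm{ex}(n,B)}$.
   Context: The bowtie $B=F_{2,3}$ consists of two triangles sharing exactly one vertex, the center. For a directed graph $\vec H$, $D(n,\vec H)$ is the maximum, over all $n$-vertex graphs $G$, of the number of orientations of $G$ containing no copy of $\vec H$; $\mathrm{ex}(n,B)$ is the Turán number of $B$ (equal to $\lfloor n^2/4\rfloor+1$ for large $n$). *)

From mathcomp Require Import all_boot.
Set Implicit Arguments. Unset Strict Implicit. Unset Printing Implicit Defensive.

Definition simple_graph (V : finType) (E : {set {set V}}) : bool :=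
  [forall e in E, #|e| == 2].

Definition orientation (V : finType) (E : {set {set V}}) (O : {set (V * V)}) : bool :=
  [forall u : V, forall v : V, ((u, v) \in O) ==> ((u != v) && ([set u; v] \in E))] &&
  [forall u : V, forall v : V, ((u != v) && ([set u; v] \in E)) ==>
                                (((u, v) \in O) != ((v, u) \in O))].

Definition contains_dicopy (V W : finType) (H : {set (V * V)}) (O : {set (W * W)}) : bool :=
  [exists f : {ffun V -> W}, injectiveb f && [forall p in H, (f p.1, f p.2) \in O]].

Definition contains_copy (V W : finType) (F : {set {set V}}) (E : {set {set W}}) : bool :=
  [exists f : {ffun V -> W}, injectiveb f && [forall e in F, (f @: e) \in E]].

Definition bc : 'I_5 := inord 0.
Definition b1 : 'I_5 := inord 1.
Definition b2 : 'I_5 := inord 2.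
Definition b3 : 'I_5 := inord 3.
Definition b4 : 'I_5 := inord 4.
Definition bowtie : {set {set 'I_5}} :=
  [set [set bc; b1]; [set bc; b2]; [set b1; b2]; [set bc; b3]; [set bc; b4]; [set b3; b4]].

Definition ex (V : finType) (n : nat) (F : {set {set V}}) : nat :=
  \max_(E : {set {set 'I_n}} | simple_graph E && ~~ contains_copy F E) #|E|.

Definition D (V : finType) (n : nat) (H : {set (V * V)}) : nat :=
  \max_(E : {set {set 'I_n}} | simple_graph E)
     #|[set O : {set ('I_n * 'I_n)} | orientation E O && ~~ contains_dicopy H O]|.

From mathcomp Require Import all_boot zify.
Set Implicit Arguments. Unset Strict Implicit. Unset Printing Implicit Defensive.

(* Upper bound: a bowtie-free graph on n >= 5 vertices has at most n^2/4 + 1 edges.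
   Delete a vertex of degree at most n/2 and induct.  If all degrees exceed n/2, every
   edge lies in a triangle; bowtie-freeness says that the link of a vertex v (its
   neighbourhood, with the edges among it) has no two disjoint edges, so it is a star
   with centre u, and every other neighbour c of v has N(c) u N(v) = V.  A vertex
   outside the closed neighbourhood of v then yields a bowtie; if there is none, the
   neighbours of v have more than one common neighbour with v, contradicting the star.
   Five vertices are checked by hand.

   Lower bound: on n = a + q + 1 vertices, q = n/2, take a hub joined to all of K_{a,q}.
   Every triangle contains the hub, so a bowtie sits at the hub with one vertex of each
   side in each triangle.  Orient the a*q bipartite edges freely and the hub edges by a
   pattern avoiding the two same-direction (case (a)) or opposite-direction (case (b))
   cross pairs of hub edges that H needs; 2^(q+1) + 1 such patterns exist, and
   2^(a*q) * (2^(q+1) + 1) > 2^(a*q + q + 1) >= 2^ex(n, B). *)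

Lemma lt_add_of_lt_double m x y : m < 2 * x -> m < 2 * y -> m < x + y.
Proof. lia. Qed.

Section SimpleGraph.
Variables (V : finType) (E : {set {set V}}).
Hypothesis simpleE : simple_graph E.

Definition adj (x y : V) := [set x; y] \in E.
Definition nbr (S : {set V}) x := [set y in S | adj x y].
Definition common_nbr (S : {set V}) x y := nbr S x :&: nbr S y.
Definition edges_in (S : {set V}) := [set e in E | e \subset S].

Lemma adjC x y : adj x y = adj y x.
Proof. by rewrite /adj setUC. Qed.

Lemma card_edge e : e \in E -> #|e| = 2.
Proof. by move=> eE; apply/eqP; move/forall_inP: simpleE; apply. Qed.

Lemma adj_neq x y : adj x y -> x != y.
Proof. by move/card_edge; case: eqVneq => // ->; rewrite setUid cards1. Qed.

Lemma nbr_subset (S : {set V}) x : nbr S x \subset S :\ x.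
Proof.
apply/subsetP => y; rewrite !inE => /andP[yS /adj_neq].
by rewrite eq_sym => ->.
Qed.

Lemma card_nbr_lt (S : {set V}) x : x \in S -> #|nbr S x| < #|S|.
Proof.
move=> xS; rewrite (cardsD1 x S) xS.
exact: leq_ltn_trans (subset_leq_card (nbr_subset S x)) _.
Qed.

Lemma card_common_nbr (S : {set V}) x y :
  #|nbr S x| + #|nbr S y| <= #|S| + #|common_nbr S x y|.
Proof.
rewrite -cardsUI leq_add2r; apply: subset_leq_card.
by rewrite subUset !(subset_trans (nbr_subset _ _) (subD1set _ _)).
Qed.

Lemma card_nbr_edges (S : {set V}) x : x \in S ->
  #|nbr S x| = #|[set e in edges_in S | x \in e]|.
Proof.
move=> xS; rewrite -(@card_in_imset _ _ (fun y => [set x; y])); last first.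
  move=> y z; rewrite !inE => /andP[_ /adj_neq xy] _ eyz.
  have : y \in [set x; z] by rewrite -eyz !inE eqxx orbT.
  by rewrite !inE eq_sym (negbTE xy) => /eqP.
apply: eq_card => e; rewrite inE; apply/imsetP/idP => [[y]|].
  rewrite inE => /andP[yS xy] ->.
  by rewrite !inE -/(adj x y) xy subUset !sub1set xS yS eqxx.
rewrite !inE => /andP[/andP[eE eS] xe].
have /cards2P[a [b [ab eab]]] : #|e| == 2 by rewrite card_edge.
move: xe eS eE; rewrite eab !inE subUset !sub1set => /orP[]/eqP <- /andP[aS bS] eE.
  by exists b => //; rewrite inE bS.
by exists a; rewrite 1?inE /adj setUC // aS.
Qed.

Lemma edges_in_setD1 (S : {set V}) x : x \in S ->
  #|edges_in S| = #|edges_in (S :\ x)| + #|nbr S x|.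
Proof.
move=> xS; rewrite (card_nbr_edges xS) -(cardsID [set e : {set V} | x \in e] (edges_in S)).
rewrite addnC; congr (_ + _); apply: eq_card => e; rewrite !inE //.
by rewrite subsetD1 andbC -andbA.
Qed.

Lemma sum_card_nbr (S : {set V}) : \sum_(x in S) #|nbr S x| = 2 * #|edges_in S|.
Proof.
under eq_bigr => x xS do rewrite (card_nbr_edges xS) -sum1dep_card.
rewrite (exchange_big_dep (mem (edges_in S))) /=; last by move=> x e _ /andP[].
rewrite mulnC -sum_nat_const; apply: eq_bigr => e eSS; rewrite sum1dep_card.
have /andP[eE eS] : (e \in E) && (e \subset S) by move: eSS; rewrite inE.
rewrite -(card_edge eE).
by apply: eq_card => x; rewrite inE eSS /= andb_idl // => /(subsetP eS).
Qed.

Lemma edges_in_le (S : {set V}) : 2 * #|edges_in S| <= #|S| * #|S|.-1.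
Proof.
rewrite -sum_card_nbr -sum_nat_const; apply: leq_sum => x xS.
by rewrite -ltnS prednK ?card_nbr_lt //; apply/card_gt0P; exists x.
Qed.

Lemma bowtie_copy c x1 x2 x3 x4 : uniq [:: c; x1; x2; x3; x4] ->
  adj c x1 -> adj c x2 -> adj x1 x2 -> adj c x3 -> adj c x4 -> adj x3 x4 ->
  contains_copy bowtie E.
Proof.
move=> U a1 a2 a12 a3 a4 a34; pose s := [:: c; x1; x2; x3; x4].
apply/existsP; exists [ffun i : 'I_5 => nth c s i]; apply/andP; split.
  apply/injectiveP => i j; rewrite !ffunE => /(uniqP c U) eij.
  by apply/val_inj/eij; rewrite inE /= ltn_ord.
apply/forall_inP => e; rewrite !inE /bc /b1 /b2 /b3 /b4.
by move=> /orP[/orP[/orP[/orP[/orP[|]|]|]|]|] /eqP ->;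
  rewrite imsetU1 imset_set1 !ffunE !inordK.
Qed.

Lemma complete_of_edges (S : {set V}) : 2 * #|edges_in S| = #|S| * #|S|.-1 ->
  {in S &, forall u w, u != w -> adj u w}.
Proof.
move=> full u w uS wS uw.
have Su : #|S| = #|S :\ u|.+1 by rewrite (cardsD1 u S) uS.
have : nbr S u == S :\ u.
  rewrite eqEcard nbr_subset /=.
  move: full (card_nbr_lt uS) (edges_in_le (S :\ u)); rewrite (edges_in_setD1 uS) Su /=.
  by case: #|S :\ u| => [|t] /=; nia.
move/eqP=> Nu; have : w \in nbr S u by rewrite Nu in_setD1 eq_sym uw wS.
by rewrite inE => /andP[].
Qed.

Hypothesis bowtie_free : ~~ contains_copy bowtie E.

Lemma link_edges_meet (S : {set V}) v a b c d :
  a \in nbr S v -> b \in nbr S v -> c \in nbr S v -> d \in nbr S v ->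
  adj a b -> adj c d -> [|| a == c, a == d, b == c | b == d].
Proof.
rewrite !inE => /andP[_ va] /andP[_ vb] /andP[_ vc] /andP[_ vd] ab cd.
apply: contraNT bowtie_free => /norP[ac /norP[ad /norP[bc bd]]].
apply: (bowtie_copy (c := v) _ va vb ab vc vd cd).
rewrite /= !inE !negb_or !(adj_neq va, adj_neq vb, adj_neq vc, adj_neq vd).
by rewrite (adj_neq ab) (adj_neq cd) ac ad bc bd.
Qed.

Lemma link_common_subset (S : {set V}) v a b c :
  a \in nbr S v -> b \in nbr S v -> adj a b -> c \in nbr S v :\ a :\ b ->
  common_nbr S v c \subset [set a; b].
Proof.
move=> na nb ab; rewrite !in_setD1 => /and3P[cb ca nc].
apply/subsetP => z /setIP[nz]; rewrite !inE => /andP[_ cz].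
have := link_edges_meet na nb nc nz ab cz.
by rewrite ![_ == c]eq_sym (negbTE ca) (negbTE cb) ![_ == z]eq_sym.
Qed.

Lemma link_hub (S : {set V}) v a b :
  a \in nbr S v -> b \in nbr S v -> adj a b ->
  {in nbr S v :\ a :\ b, forall d, adj d a || adj d b} ->
  {in nbr S v :\ a :\ b, forall d, adj d a} \/ {in nbr S v :\ a :\ b, forall d, adj d b}.
Proof.
move=> na nb ab cover.
case: (boolP [forall d in nbr S v :\ a :\ b, adj d a]) => [/forall_inP|]; first by left.
case/forall_inPn => c c_in /negbTE ca; right => d d_in.
have cb : adj c b by move: (cover c c_in); rewrite ca.
have /orP[da|//] := cover d d_in; case: (eqVneq d c) => [-> //|dc].
move: d_in c_in; rewrite !in_setD1 => /and3P[db _ nd] /and3P[_ c_a nc].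
have := link_edges_meet nd na nc nb da cb.
by rewrite (negbTE dc) (negbTE db) eq_sym (negbTE c_a) (negbTE (adj_neq ab)).
Qed.

Lemma link_star_center (S : {set V}) v a b :
  a \in nbr S v -> b \in nbr S v -> adj a b -> 1 < #|nbr S v :\ a :\ b| ->
  {in nbr S v :\ a :\ b, forall d, adj d a} ->
  forall l, l \in nbr S v -> l != a -> common_nbr S v l = [set a].
Proof.
set N := nbr S v; set C := N :\ a :\ b => na nb ab C2 hu.
have notb d : d \in C -> ~~ adj d b.
  move=> dC; apply/negP => db.
  have [d' d'C d'd] : exists2 d', d' \in C & d' != d.
    have /card_gt0P[d'] : 0 < #|C :\ d| by rewrite (cardsD1 d C) dC in C2.
    by rewrite in_setD1 => /andP[]; exists d'.
  move: (dC) (d'C); rewrite !in_setD1 => /and3P[db' da' nd] /and3P[d'b d'a nd'].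
  have := link_edges_meet nd nb nd' na db (hu d' d'C).
  rewrite ![_ == d']eq_sym (negbTE d'd) (negbTE da') (negbTE d'b).
  by rewrite eq_sym (negbTE (adj_neq ab)).
have common1 l : l \in N -> adj l a -> {subset common_nbr S v l <= pred1 a} ->
    common_nbr S v l = [set a].
  move=> nl la sub; apply/setP => z; rewrite inE; apply/idP/eqP => [/sub/eqP // | ->].
  by move: na; rewrite !inE la andbT => /andP[-> ->].
move=> l nl la; case: (eqVneq l b) => [-> | lb].
  apply: common1; rewrite // 1?adjC //.
  move=> z /setIP[nz]; rewrite inE => /andP[_ bz]; rewrite inE; apply: contraT => za.
  have zC : z \in C by rewrite !in_setD1 za eq_sym (adj_neq bz).
  by move: (notb z zC); rewrite adjC bz.
have lC : l \in C by rewrite !in_setD1 lb la.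
apply: common1; rewrite ?hu //.
move=> z zc; have := subsetP (link_common_subset na nb ab lC) z zc; rewrite !inE.
case/orP => // /eqP zb; move: zc; rewrite zb !inE => /andP[_ /andP[_ lb']].
by move: (notb l lC); rewrite lb'.
Qed.

Lemma link_star (S : {set V}) v : 3 < #|nbr S v| ->
  (forall l, l \in nbr S v -> 0 < #|common_nbr S v l|) ->
  exists2 u, u \in nbr S v & forall l, l \in nbr S v -> l != u -> common_nbr S v l = [set u].
Proof.
set N := nbr S v => degv hcom.
have [a na] : exists a, a \in N by apply/card_gt0P; apply: leq_ltn_trans degv.
have [b /setIP[nb]] : exists b, b \in common_nbr S v a by apply/card_gt0P; apply: hcom.
rewrite inE => /andP[_ ab].
have cover d : d \in N :\ a :\ b -> adj d a || adj d b.
  move=> dC; have [z] : exists z, z \in common_nbr S v d.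
    by apply/card_gt0P; apply: hcom; move: dC; rewrite !inE => /and3P[].
  move=> zc; have := subsetP (link_common_subset na nb ab dC) z zc; move: zc.
  by rewrite !inE => /andP[_ /andP[_ dz]] /orP[]/eqP <-; rewrite dz ?orbT.
have C2 x y : x \in N -> y \in N :\ x -> 1 < #|N :\ x :\ y|.
  by move=> nx ny; move: degv; rewrite (cardsD1 x N) nx (cardsD1 y (N :\ x)) ny.
have [na' nb'] : a \in N :\ b /\ b \in N :\ a.
  by rewrite !in_setD1 na nb (adj_neq ab) eq_sym (adj_neq ab).
case: (link_hub na nb ab cover) => hu.
  by exists a => //; apply: link_star_center nb ab (C2 _ _ na nb') hu.
have CC : N :\ b :\ a = N :\ a :\ b by rewrite !setDDl setUC.
exists b => //; apply: (link_star_center nb na); rewrite 1?adjC ?CC //.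
by rewrite -CC; apply: C2.
Qed.

Lemma link_codegree_le1 (S : {set V}) v : 3 < #|nbr S v| ->
  exists2 l, l \in nbr S v & #|common_nbr S v l| <= 1.
Proof.
move=> degv; apply/exists_inP; apply: contraT; rewrite negb_exists_in => /forall_inP hcom.
have hcom' l : l \in nbr S v -> 1 < #|common_nbr S v l| by rewrite ltnNge; apply: hcom.
have [u nu star] := link_star degv (fun l nl => ltnW (hcom' l nl)).
have /card_gt0P[l] : 0 < #|nbr S v :\ u| by move: degv; rewrite (cardsD1 u) nu; lia.
by rewrite in_setD1 => /andP[lu nl]; move: (hcom' l nl); rewrite star // cards1.
Qed.

Lemma nbrU_cover (S : {set V}) x y : #|common_nbr S x y| <= 1 ->
  #|S| < #|nbr S x| + #|nbr S y| -> nbr S x :|: nbr S y = S.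
Proof.
move=> c1 big; apply/eqP; rewrite eqEcard.
rewrite subUset !(subset_trans (nbr_subset _ _) (subD1set _ _)) /=.
by move: big c1; rewrite -cardsUI /common_nbr; lia.
Qed.

(* The bowtie has centre u (triangles u v c, u x c') if y = u, and centre c
   (triangles c v u, c x y) otherwise. *)
Lemma outside_link_bowtie v u c c' x y :
  adj v u -> adj v c -> adj v c' -> adj c u -> adj c' u -> ~~ adj v x -> x != v ->
  adj c x -> adj c' x -> adj c y -> adj x y -> c != u -> c' != u -> c != c' -> False.
Proof.
move=> vu vc vc' cu c'u vx xv cx c'x cy xy ne_cu ne_c'u ne_cc'.
have yv : y != v by apply: contraNneq vx => <-; rewrite adjC.
have [ux c'x'] : u != x /\ c' != x by split; apply: contraNneq vx => <-.
have ne_vu := adj_neq vu; have ne_vc := adj_neq vc; have ne_vc' := adj_neq vc'.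
have ne_cx := adj_neq cx; have ne_cy := adj_neq cy; have ne_xy := adj_neq xy.
case/negP: bowtie_free; case: (eqVneq y u) => [yu | yu].
  rewrite yu in xy; apply: (@bowtie_copy u v c x c'); rewrite // 1?adjC //.
  by rewrite /= !inE !negb_or; do !(apply/andP; split); rewrite // eq_sym.
apply: (@bowtie_copy c v u x y); rewrite // 1?adjC //.
by rewrite /= !inE !negb_or; do !(apply/andP; split); rewrite // eq_sym.
Qed.

Lemma exists_low_degree (S : {set V}) : 6 <= #|S| ->
  exists2 x, x \in S & 2 * #|nbr S x| <= #|S|.
Proof.
move=> S6; apply/exists_inP; apply: contraT; rewrite negb_exists_in.
move=> /forall_inP hd; have {}hd x : x \in S -> #|S| < 2 * #|nbr S x|.
  by move=> xS; rewrite ltnNge; apply: hd.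
have inS z y : z \in nbr S y -> z \in S by rewrite inE => /andP[].
have common_pos x y : x \in S -> y \in S -> 0 < #|common_nbr S x y|.
  by move=> xS yS; have := card_common_nbr S x y; have := hd x xS; have := hd y yS; lia.
have [v vS] : exists v, v \in S by apply/card_gt0P; apply: leq_trans S6.
have degv : 3 < #|nbr S v| by have := hd v vS; lia.
have [u nu star] := link_star degv (fun l nl => common_pos v l vS (inS l v nl)).
have [x xS] : exists2 x, x \in S & x \notin v |: nbr S v.
  apply/subsetPn; apply: contraT => /negPn /subset_leq_card; rewrite cardsU1.
  have [l nl lc] := link_codegree_le1 degv.
  by have := card_common_nbr S v l; have := hd l (inS l v nl); lia.
rewrite in_setU1 negb_or => /andP[xv xN].
have leaf_adj d : d \in nbr S v -> d != u -> adj d x /\ adj d u.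
  move=> nd du; have cd := star d nd du.
  have dS := inS d v nd.
  have cover : nbr S d :|: nbr S v = S.
    apply: nbrU_cover; first by rewrite /common_nbr setIC -/(common_nbr S v d) cd cards1.
    by apply: lt_add_of_lt_double; apply: hd.
  have ud : u \in nbr S d by move: (set11 u); rewrite -cd => /setIP[].
  move: xS ud; rewrite -{1}cover in_setU (negbTE xN) orbF !inE.
  by move=> /andP[_ ->] /andP[_ ->].
have /card_gt1P[c [c' [cN c'N cc']]] : 1 < #|nbr S v :\ u|.
  by move: degv; rewrite (cardsD1 u) nu; lia.
move: cN c'N; rewrite !in_setD1 => /andP[cu nc] /andP[c'u nc'].
have [cx cuA] := leaf_adj c nc cu; have [c'x c'uA] := leaf_adj c' nc' c'u.
have [y /setIP[]] : exists y, y \in common_nbr S c x.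
  by apply/card_gt0P; apply: common_pos => //; apply: inS nc.
rewrite !inE => /andP[_ cy] /andP[_ xy].
have [vu vc vc'] : [/\ adj v u, adj v c & adj v c'].
  by move: nu nc nc'; rewrite !inE => /andP[_ ->] /andP[_ ->] /andP[_ ->].
have vx : ~~ adj v x by move: xN; rewrite inE xS.
by case: (outside_link_bowtie vu vc vc' cuA c'uA vx xv cx c'x cy xy cu c'u cc').
Qed.

Lemma five_vertex_edges (S : {set V}) : #|S| = 5 -> #|edges_in S| <= 7.
Proof.
move=> S5; rewrite leqNgt; apply/negP => big.
have inS z y : z \in nbr S y -> z \in S by rewrite inE => /andP[].
case: (boolP [exists x in S, #|nbr S x| <= 2]) => [/exists_inP[x xS lowx] | ].
  (* S :\ x spans a K4 and x has two neighbours a, b in it: a bowtie centred at a. *)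
  have S'4 : #|S :\ x| = 4 by move: S5; rewrite (cardsD1 x S) xS => -[].
  have full := edges_in_le (S :\ x); rewrite S'4 in full.
  rewrite (edges_in_setD1 xS) in big.
  have /complete_of_edges K4 : 2 * #|edges_in (S :\ x)| = #|S :\ x| * #|S :\ x|.-1.
    by rewrite S'4; lia.
  have /cards2P[a [b [ab Nx]]] : #|nbr S x| == 2 by lia.
  have [aS bS] : a \in S :\ x /\ b \in S :\ x.
    by split; apply: (subsetP (nbr_subset S x)); rewrite Nx !inE eqxx ?orbT.
  have /cards2P[c [d [cd Rcd]]] : #|S :\ x :\ a :\ b| == 2.
    have := cardsD1 a (S :\ x); have := cardsD1 b (S :\ x :\ a).
    by rewrite aS in_setD1 eq_sym ab bS; lia.
  have : (c \in S :\ x :\ a :\ b) && (d \in S :\ x :\ a :\ b) by rewrite Rcd !inE !eqxx orbT.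
  rewrite !in_setD1 => /andP[/and4P[cb ca cx cS] /and4P[db da dx dS]].
  have [xa xb] : adj x a /\ adj x b.
    by split; [move: (set21 a b) | move: (set22 a b)]; rewrite -Nx inE => /andP[].
  have [cS' dS'] : c \in S :\ x /\ d \in S :\ x by rewrite !in_setD1 cx cS dx dS.
  have ne_xa := adj_neq xa; have ne_xb := adj_neq xb.
  case/negP: bowtie_free; apply: (@bowtie_copy a x b c d) => //;
    try by apply: K4; rewrite // eq_sym.
  - by rewrite /= !inE !negb_or; do !(apply/andP; split); rewrite // eq_sym.
  - by rewrite adjC.
(* Minimum degree 3 with 8 edges gives a vertex of degree 4, whose neighbours all
   have codegree at least 2 with it. *)
rewrite negb_exists_in => /forall_inP high.
have [v vS degv] : exists2 v, v \in S & 3 < #|nbr S v|.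
  apply/exists_inP; apply: contraT; rewrite negb_exists_in => /forall_inP low.
  have : \sum_(x in S) #|nbr S x| <= \sum_(x in S) 3.
    by apply: leq_sum => x xS; rewrite leqNgt; apply: low.
  by rewrite sum_card_nbr sum_nat_const S5; lia.
have [l nl] := link_codegree_le1 degv.
by have := card_common_nbr S v l; have := high l (inS l v nl); lia.
Qed.

Theorem bowtie_free_edges (S : {set V}) : 5 <= #|S| -> #|edges_in S| <= #|S| ^ 2 %/ 4 + 1.
Proof.
have [n] := ubnP #|S|; elim: n S => // n IH S ltS S5.
case: (eqVneq #|S| 5) => [S5'|]; first by rewrite S5' five_vertex_edges.
move=> Sn5; have [x xS lowx] : exists2 x, x \in S & 2 * #|nbr S x| <= #|S|.
  by apply: exists_low_degree; lia.
have Sx : #|S| = #|S :\ x|.+1 by rewrite (cardsD1 x S) xS.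
rewrite (edges_in_setD1 xS) Sx; rewrite Sx in lowx ltS S5 Sn5.
have := IH (S :\ x); nia.
Qed.

End SimpleGraph.

Lemma ex_bowtie_le n : 5 <= n -> ex n bowtie <= n ^ 2 %/ 4 + 1.
Proof.
move=> n5; apply/bigmax_leqP => E /andP[sE nB].
have := @bowtie_free_edges _ E sE nB [set: 'I_n]; rewrite cardsT card_ord => /(_ n5).
by apply: leq_trans; apply: subset_leq_card; apply/subsetP => e eE; rewrite inE eE subsetT.
Qed.

Definition free_orientations (V W : finType) (E : {set {set W}}) (H : {set V * V}) :=
  [set O : {set W * W} | orientation E O && ~~ contains_dicopy H O].

Section Relabel.
Variables (V W : finType) (n : nat) (psi : 'I_n -> W).
Hypothesis psi_bij : bijective psi.

Let psi_inj : injective psi := bij_inj psi_bij.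

Definition relabel_graph (E : {set {set W}}) : {set {set 'I_n}} :=
  [set e : {set 'I_n} | psi @: e \in E].
Definition relabel_digraph (O : {set W * W}) : {set 'I_n * 'I_n} :=
  [set uv : 'I_n * 'I_n | (psi uv.1, psi uv.2) \in O].

Lemma relabel_graph2 E u v : ([set u; v] \in relabel_graph E) = ([set psi u; psi v] \in E).
Proof. by rewrite inE imsetU1 imset_set1. Qed.

Lemma relabel_simple E : simple_graph E -> simple_graph (relabel_graph E).
Proof.
move=> /forall_inP sE; apply/forall_inP => e; rewrite inE => /sE.
by rewrite card_imset.
Qed.

Lemma relabel_orientation E O :
  orientation E O -> orientation (relabel_graph E) (relabel_digraph O).
Proof.
case/andP=> /forallP arcsE /forallP edgesO; apply/andP; split.
  apply/forallP => u; apply/forallP => v; apply/implyP; rewrite inE /=.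
  move/forallP: (arcsE (psi u)) => /(_ (psi v))/implyP/[apply]/andP[uv uvE].
  by rewrite relabel_graph2 uvE andbT (inj_eq psi_inj) in uv *.
apply/forallP => u; apply/forallP => v; apply/implyP; rewrite relabel_graph2 !inE /=.
by rewrite -(inj_eq psi_inj); move/forallP: (edgesO (psi u)) => /(_ (psi v))/implyP.
Qed.

Lemma relabel_dicopy (H : {set V * V}) O :
  contains_dicopy H (relabel_digraph O) -> contains_dicopy H O.
Proof.
case/existsP=> f /andP[/injectiveP finj /forall_inP fH].
apply/existsP; exists [ffun i => psi (f i)]; apply/andP; split.
  by apply/injectiveP => i j; rewrite !ffunE => /psi_inj/finj.
by apply/forall_inP => p /fH; rewrite !inE !ffunE.
Qed.

Lemma relabel_digraph_inj : injective relabel_digraph.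
Proof.
case: psi_bij => phi psiK phiK O1 O2 eqO; apply/setP => -[a b].
have := congr1 (fun O : {set 'I_n * 'I_n} => (phi a, phi b) \in O) eqO.
by rewrite /= !inE /= !phiK.
Qed.

Lemma free_orientations_relabel (H : {set V * V}) E :
  #|free_orientations E H| <= #|free_orientations (relabel_graph E) H|.
Proof.
rewrite -(card_imset _ relabel_digraph_inj); apply: subset_leq_card.
apply/subsetP => O' /imsetP[O]; rewrite inE => /andP[oO fO] ->.
rewrite inE relabel_orientation //=; apply: contra fO; apply: relabel_dicopy.
Qed.

End Relabel.

Lemma free_orientations_le_D (V W : finType) (H : {set V * V}) (E : {set {set W}}) n :
  #|W| = n -> simple_graph E -> #|free_orientations E H| <= D n H.
Proof.
move=> cardW sE; pose psi (i : 'I_n) := enum_val (cast_ord (esym cardW) i).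
have psi_bij : bijective psi.
  exists (fun x => cast_ord cardW (enum_rank x)) => x; rewrite /psi.
    by rewrite enum_valK cast_ordKV.
  by rewrite cast_ordK enum_rankK.
apply: leq_trans (free_orientations_relabel psi_bij H E) _.
exact: (leq_bigmax_cond _ (relabel_simple psi_bij sE)).
Qed.

Lemma orientation_asym (V : finType) (E : {set {set V}}) O u v :
  orientation E O -> (u, v) \in O -> (v, u) \notin O.
Proof.
case/andP=> /forallP/(_ u)/forallP/(_ v)/implyP arcs.
move=> /forallP/(_ u)/forallP/(_ v)/implyP one uv.
by move: (one (arcs uv)); rewrite uv; case: ((v, u) \in O).
Qed.

Lemma bowtie_center_edge i :
  i \in [:: b1; b2; b3; b4] -> ([set bc; i] \in bowtie) && (bc != i).
Proof.
by rewrite !inE => /or4P[]/eqP->; rewrite eqxx ?orbT /= -val_eqE /= !inordK.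
Qed.

Lemma bowtie_triangle_edges :
  [&& [set b1; b2] \in bowtie, [set b3; b4] \in bowtie, b1 != b2 & b3 != b4].
Proof. by rewrite /bowtie !inE !eqxx ?orbT //= -!val_eqE /= !inordK. Qed.

Lemma bowtie_vertices_uniq : uniq [:: bc; b1; b2; b3; b4].
Proof. by rewrite /= !inE -!val_eqE /= !inordK. Qed.

Section EdgeSet.
Variables (T : finType) (r : rel T).
Hypothesis rC : symmetric r.

Definition edge_set : {set {set T}} :=
  [set e : {set T} | (#|e| == 2) && [forall x in e, forall y in e, (x != y) ==> r x y]].

Lemma edge_set_simple : simple_graph edge_set.
Proof. by apply/forall_inP => e; rewrite inE => /andP[]. Qed.

Lemma edge_set2 x y : ([set x; y] \in edge_set) = (x != y) && r x y.
Proof.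
rewrite inE cards2; case: (eqVneq x y) => [-> | xy] //=.
apply/forall_inP/idP => [/(_ x (set21 x y))/forall_inP/(_ y (set22 x y)) | rxy u].
  by rewrite xy.
rewrite !inE => /orP[]/eqP ->; apply/forall_inP => v; rewrite !inE => /orP[]/eqP ->;
  by rewrite ?eqxx // ?(rC y) rxy implybT.
Qed.

End EdgeSet.

Section HubGraph.
Variables (A B : finType).
Local Notation hub_vertex := (option (A + B)).

Definition cross (x y : A + B) : bool :=
  match x, y with inl _, inr _ | inr _, inl _ => true | _, _ => false end.

Definition hub_adj (x y : hub_vertex) : bool :=
  match x, y with
  | None, Some _ | Some _, None => true
  | Some u, Some w => cross u w
  | None, None => false
  end.

Lemma hub_adjC : symmetric hub_adj.
Proof. by do 2![case=> [[?|?]|]]. Qed.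

Lemma hub_adj_neq x y : hub_adj x y -> x != y.
Proof. by case: x y => [[?|?]|] [[?|?]|]. Qed.

Definition hub_graph := edge_set hub_adj.

Lemma hub_graph2 x y : ([set x; y] \in hub_graph) = hub_adj x y.
Proof.
rewrite edge_set2; last exact: hub_adjC.
by case: (boolP (hub_adj x y)) => [/hub_adj_neq -> | _]; rewrite ?andbF.
Qed.

Lemma hub_triangle x y z : hub_adj x y -> hub_adj y z -> hub_adj x z ->
  None \in [:: x; y; z].
Proof. by case: x y z => [[?|?]|] [[?|?]|] [[?|?]|]. Qed.

Lemma hub_bowtie_center c x1 x2 x3 x4 : uniq [:: c; x1; x2; x3; x4] ->
  hub_adj c x1 -> hub_adj c x2 -> hub_adj x1 x2 ->
  hub_adj c x3 -> hub_adj c x4 -> hub_adj x3 x4 -> c = None.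
Proof.
case: c => // u U a1 a2 a12 a3 a4 a34; move: U.
move: (hub_triangle a1 a12 a2) (hub_triangle a3 a34 a4); rewrite !inE /=.
by do 2!case/orP=> /eqP <-; rewrite !inE ?eqxx ?orbT ?andbF.
Qed.

Definition hub_arc (g : {ffun A * B -> bool}) (h : {ffun A + B -> bool}) (x y : hub_vertex) :=
  match x, y with
  | None, Some w => h w
  | Some u, None => ~~ h u
  | Some (inl a), Some (inr b) => g (a, b)
  | Some (inr b), Some (inl a) => ~~ g (a, b)
  | _, _ => false
  end.

Definition hub_orientation g h : {set hub_vertex * hub_vertex} :=
  [set uv | hub_arc g h uv.1 uv.2].

Lemma hub_arc_adj g h x y : hub_arc g h x y -> hub_adj x y.
Proof. by case: x y => [[?|?]|] [[?|?]|]. Qed.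

Lemma hub_orientationP g h : orientation hub_graph (hub_orientation g h).
Proof.
apply/andP; split; apply/forallP => x; apply/forallP => y; apply/implyP;
  rewrite hub_graph2 ?inE /=.
  by move=> /hub_arc_adj xy; rewrite xy hub_adj_neq.
case/andP=> _; case: x y => [[?|?]|] [[?|?]|] //= _;
  by [case: (g _) | case: (h _)].
Qed.

Lemma hub_orientation_inj : injective (fun gh => hub_orientation gh.1 gh.2).
Proof.
move=> [g1 h1] [g2 h2] /= eqO.
have arc x y : hub_arc g1 h1 x y = hub_arc g2 h2 x y.
  by have := congr1 (fun O : {set hub_vertex * hub_vertex} => (x, y) \in O) eqO; rewrite !inE.
congr (_, _); apply/ffunP.
  by move=> [a b]; apply: (arc (Some (inl a)) (Some (inr b))).
by move=> w; apply: (arc None (Some w)).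
Qed.

(* What is left of a copy of the bowtie, once its centre is known to be the hub: two
   disjoint cross pairs of leaves with [h = s] on one and [h = t] on the other, where
   [h x] says that the hub edge at [x] points away from the hub. *)
Definition leaf_bowtie (h : {ffun A + B -> bool}) (s t : bool) : Prop :=
  exists x1 x2 x3 x4, [/\ uniq [:: x1; x2; x3; x4], cross x1 x2 && cross x3 x4
    & [&& h x1 == s, h x2 == s, h x3 == t & h x4 == t]].

Lemma hub_dicopy_leaves (H : {set 'I_5 * 'I_5}) g h : orientation bowtie H ->
  ((bc, b1) \in H) = ((bc, b2) \in H) -> ((bc, b3) \in H) = ((bc, b4) \in H) ->
  contains_dicopy H (hub_orientation g h) ->
  leaf_bowtie h ((bc, b1) \in H) ((bc, b3) \in H).
Proof.
move=> /andP[_ /forallP oH] s12 s34 /existsP[f /andP[/injectiveP finj /forall_inP fH]].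
have arc i j : (i, j) \in H -> hub_arc g h (f i) (f j) by move/fH; rewrite inE.
have one_way i j : i != j -> [set i; j] \in bowtie -> ((j, i) \in H) = ~~ ((i, j) \in H).
  move=> ij ijB; move/forallP/(_ j)/implyP: (oH i); rewrite ij ijB => /(_ isT).
  by case: ((i, j) \in H); case: ((j, i) \in H).
have edge i j : [set i; j] \in bowtie -> i != j -> hub_adj (f i) (f j).
  move=> ijB ij; case: (boolP ((i, j) \in H)) => [/arc/hub_arc_adj // | nij].
  by rewrite hub_adjC; apply/hub_arc_adj/arc; rewrite one_way.
have Uf : uniq (map f [:: bc; b1; b2; b3; b4]) by rewrite map_inj_uniq ?bowtie_vertices_uniq.
have cedge i : i \in [:: b1; b2; b3; b4] -> hub_adj (f bc) (f i).
  by case/bowtie_center_edge/andP; exact: edge.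
have f0 : f bc = None.
  have /and4P[e12 e34 n12 n34] := bowtie_triangle_edges.
  by apply: (hub_bowtie_center Uf); try apply: cedge; rewrite ?inE ?eqxx ?orbT //; apply: edge.
have leaf i : i \in [:: b1; b2; b3; b4] ->
    exists2 l, f i = Some l & h l = ((bc, i) \in H).
  case/bowtie_center_edge/andP=> iB ci; case fi: (f i) => [l|]; last first.
    by move: ci; rewrite -(inj_eq finj) f0 fi.
  exists l => //; case: (boolP ((bc, i) \in H)) => [/arc | nH]; first by rewrite f0 fi.
  have /arc : (i, bc) \in H by rewrite one_way // eq_sym.
  by rewrite f0 fi; case: l {fi} => ? /= /negbTE.
have [m1 m2 m3 m4] : [/\ b1 \in [:: b1; b2; b3; b4], b2 \in [:: b1; b2; b3; b4],
    b3 \in [:: b1; b2; b3; b4] & b4 \in [:: b1; b2; b3; b4]] by rewrite !inE !eqxx ?orbT.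
have [l1 e1 h1] := leaf _ m1; have [l2 e2 h2] := leaf _ m2.
have [l3 e3 h3] := leaf _ m3; have [l4 e4 h4] := leaf _ m4.
have /and4P[e12 e34 n12 n34] := bowtie_triangle_edges.
exists l1, l2, l3, l4; split; last by rewrite h1 h2 h3 h4 s12 s34 !eqxx.
  rewrite -(map_inj_uniq (@Some_inj _)).
  by move: Uf; rewrite /= f0 e1 e2 e3 e4 => /andP[].
by move: (edge _ _ e12 n12) (edge _ _ e34 n34); rewrite e1 e2 e3 e4 => /= -> ->.
Qed.

Lemma leaf_bowtie_negate (h : {ffun A + B -> bool}) s t :
  leaf_bowtie [ffun x => ~~ h x] s t -> leaf_bowtie h (~~ s) (~~ t).
Proof.
case=> [x1 [x2 [x3 [x4 [U cr hs]]]]]; exists x1, x2, x3, x4; split => //.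
by move: hs; rewrite !ffunE -!(eqb_negLR (h _)).
Qed.

Variables (a0 a1 : A).
Hypothesis a01 : a0 != a1.

(* [Some (c, beta)] puts [fA c] on the A-side and [beta] on the B-side; [None] is one
   extra pattern, false only at [a1], which lifts the count above 2 ^ #|B|.+1. *)
Definition hub_pattern (fA : bool -> A -> bool) (d : option (bool * {ffun B -> bool})) :
    {ffun A + B -> bool} :=
  [ffun x => match d, x with
             | Some (c, _), inl a => fA c a
             | Some (_, beta), inr b => beta b
             | None, inl a => a != a1
             | None, inr _ => true
             end].

Definition hub_patterns fA := [set hub_pattern fA d | d in predT].

Lemma card_hub_patterns fA : (forall c, fA c a0 = c) -> fA true a1 ->
  #|hub_patterns fA| = 2 ^ #|B|.+1 + 1.
Proof.
move=> fA0 fA1; rewrite card_imset; last first.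
  move=> [[c1 beta1]|] [[c2 beta2]|] /ffunP eqp.
  - have := eqp (inl a0); rewrite !ffunE !fA0 => ->; congr (Some (_, _)).
    by apply/ffunP => b; have := eqp (inr b); rewrite !ffunE.
  - have := eqp (inl a1); have := eqp (inl a0); rewrite !ffunE fA0 a01 => ->.
    by rewrite fA1 eqxx.
  - have := eqp (inl a1); have := eqp (inl a0); rewrite !ffunE fA0 a01 => <-.
    by rewrite fA1 eqxx.
  - by [].
by rewrite card_option card_prod card_bool card_ffun card_bool addn1 expnS.
Qed.

Lemma single_pattern_free d :
  ~ leaf_bowtie (hub_pattern (fun c a => (a != a0) || c) d) false false.
Proof.
case=> [x1 [x2 [x3 [x4 []]]]]; case: d => [[c beta]|];
  case: x1 x2 x3 x4 => [?|?] [?|?] [?|?] [?|?] //= U _;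
  rewrite !ffunE ?eqbF_neg ?negb_or ?negbK ?andbF //.
all: case/and4P; do 4 first [case/andP => /eqP ? _ | move=> _]; subst.
all: by move: U; rewrite !inE ?eqxx ?orbT ?andbF.
Qed.

Lemma const_pattern_free d s t : s != t ->
  ~ leaf_bowtie (hub_pattern (fun c _ => c) d) s t.
Proof.
move=> st [x1 [x2 [x3 [x4 [_]]]]]; case: d => [[c beta]|];
  case: x1 x2 x3 x4 => [?|?] [?|?] [?|?] [?|?] //= _; rewrite !ffunE.
all: by case: s t st => [] [] //; try case: c; rewrite /= ?andbF.
Qed.

Lemma hub_free_orientations (H : {set 'I_5 * 'I_5}) (P : {set {ffun A + B -> bool}}) :
  (forall g h, h \in P -> ~~ contains_dicopy H (hub_orientation g h)) ->
  2 ^ (#|A| * #|B|) * #|P| <= D (#|A| + #|B|).+1 H.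
Proof.
move=> freeP.
have cardV : #|{: hub_vertex}| = (#|A| + #|B|).+1 by rewrite card_option card_sum.
apply: leq_trans (free_orientations_le_D H cardV (edge_set_simple hub_adj)).
have -> : 2 ^ (#|A| * #|B|) * #|P| = #|setX [set: {ffun A * B -> bool}] P|.
  by rewrite cardsX cardsT card_ffun card_bool card_prod.
rewrite -(card_imset _ hub_orientation_inj); apply: subset_leq_card.
apply/subsetP => O /imsetP[[g h]]; rewrite inE => /andP[_ hP] ->.
by rewrite inE hub_orientationP freeP.
Qed.

Lemma hub_bowtie_lower_bound (H : {set 'I_5 * 'I_5}) : orientation bowtie H ->
  ((bc, b1) \in H) = ((bc, b2) \in H) -> ((bc, b3) \in H) = ((bc, b4) \in H) ->
  2 ^ (#|A| * #|B|) * (2 ^ #|B|.+1 + 1) <= D (#|A| + #|B|).+1 H.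
Proof.
move=> oH s12 s34; have leaves := hub_dicopy_leaves oH s12 s34.
move: ((bc, b1) \in H) ((bc, b3) \in H) leaves => s t leaves.
suff [P [cardP freeP]] : exists P : {set {ffun A + B -> bool}},
    #|P| = 2 ^ #|B|.+1 + 1 /\ forall h, h \in P -> ~ leaf_bowtie h s t.
  rewrite -cardP; apply: hub_free_orientations => g h /freeP hfree.
  by apply/negP => /leaves.
clear leaves.
have card_single : #|hub_patterns (fun c a => (a != a0) || c)| = 2 ^ #|B|.+1 + 1.
  by apply: card_hub_patterns => [c|]; rewrite ?eqxx ?orbT.
(* Same direction in both triangles: only [a0] may carry it on the A-side;
   opposite directions: make the A-side constant. *)
case: (eqVneq s t) => [<- | st]; last first.
  exists (hub_patterns (fun c _ => c)); split; first exact: card_hub_patterns.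
  by move=> _ /imsetP[d _ ->]; apply: const_pattern_free.
case: s; last first.
  by exists (hub_patterns (fun c a => (a != a0) || c)); split => // _ /imsetP[d _ ->];
    apply: single_pattern_free.
pose negf (h : {ffun A + B -> bool}) := [ffun x => ~~ h x].
have negf_inj : injective negf.
  by move=> h1 h2 /ffunP eqh; apply/ffunP => x; move: (eqh x); rewrite !ffunE => /negb_inj.
exists (negf @: hub_patterns (fun c a => (a != a0) || c)); split; first by rewrite card_imset.
move=> _ /imsetP[_ /imsetP[d _ ->] ->] /leaf_bowtie_negate.
exact: single_pattern_free.
Qed.

End HubGraph.

Lemma balanced_split n : 5 <= n ->
  exists a q, [/\ n = (a + q).+1, 1 < a & q = a \/ q = a.+1].
Proof. by move=> n5; exists (n.-1 - n./2), n./2; split; lia. Qed.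

Lemma balanced_quarter_square a q : q = a \/ q = a.+1 ->
  (a + q).+1 ^ 2 %/ 4 + 1 <= a * q + q.+1.
Proof. by case=> ->; nia. Qed.

Theorem mainTheorem6 (H : {set ('I_5 * 'I_5)}) :
  orientation bowtie H ->
  ( (* (a) all four center edges into the center, or all four out of it *)
    ((b1, bc) \in H /\ (b2, bc) \in H /\ (b3, bc) \in H /\ (b4, bc) \in H)
    \/ ((bc, b1) \in H /\ (bc, b2) \in H /\ (bc, b3) \in H /\ (bc, b4) \in H)
    (* (b) one triangle's center edges both in, the other's both out *)
    \/ ((b1, bc) \in H /\ (b2, bc) \in H /\ (bc, b3) \in H /\ (bc, b4) \in H)
    \/ ((bc, b1) \in H /\ (bc, b2) \in H /\ (b3, bc) \in H /\ (b4, bc) \in H) ) ->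
  exists N : nat, forall n : nat, N <= n -> 2 ^ ex n bowtie < D n H.
Proof.
move=> oH cases.
have [s12 s34] : ((bc, b1) \in H) = ((bc, b2) \in H) /\ ((bc, b3) \in H) = ((bc, b4) \in H).
  have in_center i : (i, bc) \in H -> ((bc, i) \in H) = false.
    by move/(orientation_asym oH)/negbTE.
  by case: cases => [[/in_center-> [/in_center-> [/in_center-> /in_center->]]]
                   | [[-> [-> [-> ->]]]
                   | [[/in_center-> [/in_center-> [-> ->]]]
                   |  [-> [-> [/in_center-> /in_center->]]]]]].
exists 5 => n n5.
have [a [q [En a2 hq]]] := balanced_split n5; subst n.
have a01 : Ordinal (ltnW a2) != Ordinal a2 by rewrite -val_eqE.
have := hub_bowtie_lower_bound 'I_q a01 oH s12 s34; rewrite !card_ord.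
apply: leq_trans; apply: (@leq_ltn_trans (2 ^ (a * q + q.+1))).
  by apply: leq_pexp2l => //; exact: leq_trans (ex_bowtie_le n5) (balanced_quarter_square hq).
by rewrite mulnDr muln1 -expnD -{1}[2 ^ _]addn0 ltn_add2l expn_gt0.
Qed.
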